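(* Let $l\in\mathbb{N}\setminus\{1\}$ and let $(S_i,+)$, $i=1,\dots,l$, be countable adequate commutative partial semigroups. For each $i\in\{1,\dots,l\}$ let $\langle x_{i,n}\rangle_{n=1}^{\infty}$ be an adequate sequence in $S_i$. Let $m,r\in\mathbb{N}$ and suppose $S_1\times S_2\times\cdots\times S_l=\bigcup_{j=1}^{r}D_j$. Then there exist $j\in\{1,\dots,r\}$, for each $i\in\{1,\dots,l-1\}$ a product subsystem $\langle y_{i,n}\rangle_{n=1}^{m}$ of $FS(\langle x_{i,n}\rangle_{n=1}^{\infty})$, and an (infinite) product subsystem $\langle y_{l,n}\rangle_{n=1}^{\infty}$ of $FS(\langle x_{l,n}\rangle_{n=1}^{\infty})$ such that \[ \Big(FS(\langle y_{1,n}\rangle_{n=1}^{m})\times\cdots\times FS(\langle y_{l-1,n}\rangle_{n=1}^{m})\Big)\times FS(\langle y_{l,n}\rangle_{n=1}^{\infty})\subseteq D_j . \]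
   Context: A partial semigroup $(S,+)$ is a set with a map $+$ from a subset of $S\times S$ to $S$ such that $(a+b)+c=a+(b+c)$ whenever either side is defined (then both are defined and equal). It is commutative if for all $a,b$, $a+b$ is defined iff $b+a$ is defined, and then they are equal. For $s\in S$, $\varphi(s)=\{t: s+t\text{ defined}\}$; for finite nonempty $H\subseteq S$, $\sigma(H)=\bigcap_{s\in H}\varphi(s)$; $S$ is adequate if all $\sigma(H)\ne\emptyset$. For a sequence $\langle x_n\rangle$, $FS(\langle x_n\rangle_{n=k}^{\infty})$ is the set of sums $\sum_{n\in F}x_n$ over finite nonempty $F\subseteq\{k,k+1,\dots\}$, and $FS(\langle x_n\rangle_{n=1}^{m})$ the set of such sums over nonempty $F\subseteq\{1,\dots,m\}$. A sequence $\langle x_n\rangle_{n=1}^\infty$ in $S$ is adequate if every $\sum_{n\in F}x_n$ ($F$ finite nonempty) is defined and for every finite nonempty $H\subseteq S$ there is $m$ with $FS(\langle x_n\rangle_{n=m}^\infty)\subseteq\sigma(H)$. Given an adequate sequence $\langle y_n\rangle$ and $k\in\mathbb{N}$, a sequence $\langle x_n\rangle_{n=1}^{m}$ (resp. $\langle x_n\rangle_{n=1}^{\infty}$) is a product subsystem of $FS(\langle y_n\rangle_{n=k}^{\infty})$ if there are finite nonempty $H_n\subseteq\mathbb{N}$ with $\min H_1\ge k$, $\max H_n<\min H_{n+1}$ for all relevant $n$, and $x_n=\sum_{t\in H_n}y_t$ for all relevant $n$. *)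

From mathcomp Require Import all_boot.
From Stdlib Require List.
Set Implicit Arguments. Unset Strict Implicit. Unset Printing Implicit Defensive.

(* A partial operation on S: op a b = None means "a + b undefined". *)

Definition padd (S : Type) (op : S -> S -> option S) (a b : option S) : option S :=
  match a, b with Some x, Some y => op x y | _, _ => None end.

(* (a+b)+c = a+(b+c) whenever either side is defined (then both defined, equal):
   this is exactly equality of the two option values. *)
Definition is_psemigroup (S : Type) (op : S -> S -> option S) : Prop :=
  forall a b c, padd op (op a b) (Some c) = padd op (Some a) (op b c).

Definition pcommutative (S : Type) (op : S -> S -> option S) : Prop :=
  forall a b, op a b = op b a.

Definition countable_type (S : Type) : Prop :=
  exists f : S -> nat, injective f.

Definition adequate (S : Type) (op : S -> S -> option S) : Prop :=
  forall H : seq S, H <> [::] ->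
    exists t, forall s, List.In s H -> op s t <> None.

(* finite nonempty subsets of nat, represented as strictly increasing lists *)
Definition fin_index (F : seq nat) : Prop := F <> [::] /\ sorted ltn F.

Fixpoint fsum (S : Type) (op : S -> S -> option S) (x : nat -> S) (F : seq nat)
  : option S :=
  match F with
  | [::] => None
  | n :: F' => if F' is [::] then Some (x n) else padd op (Some (x n)) (fsum op x F')
  end.

Definition FS_from (S : Type) (op : S -> S -> option S) (x : nat -> S) (k : nat)
  (s : S) : Prop :=
  exists F, fin_index F /\ all (fun n => k <= n) F /\ fsum op x F = Some s.

(* s \in FS(<x_n>_{n < m}) (0-based finite sequence of length m) *)
Definition FS_upto (S : Type) (op : S -> S -> option S) (x : nat -> S) (m : nat)
  (s : S) : Prop :=
  exists F, fin_index F /\ all (fun n => n < m) F /\ fsum op x F = Some s.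

Definition adequate_seq (S : Type) (op : S -> S -> option S) (x : nat -> S) : Prop :=
  (forall F, fin_index F -> fsum op x F <> None) /\
  (forall H : seq S, H <> [::] ->
     exists k, forall s, FS_from op x k s -> forall h, List.In h H -> op h s <> None).

Definition prodsub_fin (S : Type) (op : S -> S -> option S) (x : nat -> S)
  (k m : nat) (y : nat -> S) : Prop :=
  exists H : nat -> seq nat,
    (forall n, n < m -> fin_index (H n)) /\
    (0 < m -> all (fun t => k <= t) (H 0)) /\
    (forall n, n.+1 < m -> last 0 (H n) < head 0 (H n.+1)) /\
    (forall n, n < m -> fsum op x (H n) = Some (y n)).

Definition prodsub_inf (S : Type) (op : S -> S -> option S) (x : nat -> S)
  (k : nat) (y : nat -> S) : Prop :=
  exists H : nat -> seq nat,
    (forall n, fin_index (H n)) /\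
    all (fun t => k <= t) (H 0) /\
    (forall n, last 0 (H n) < head 0 (H n.+1)) /\
    (forall n, fsum op x (H n) = Some (y n)).

From mathcomp Require Import all_boot.
From mathcomp Require Import boolp classical_sets filter.

(* Code a point of the product by one finite index set per coordinate: the
   sum over a union of consecutive blocks is the sum of the block sums, so
   product subsystems correspond to block sequences of indices.  By
   Ellis-Numakura there is an idempotent ultrafilter p on finite index sets
   (under concatenation) containing every tail, and by Galvin-Glazer every
   p-large set contains all finite unions of some block sequence.  Taking
   p-limits of the colour in the coordinates k, ..., l-1 colours the first k
   coordinates.  By induction on k, choose blocks for the first k coordinates
   so that this limit colour is constant on the tuples whose coordinates are
   unions among the first m blocks: there are finitely many such prefixes, so
   p-almost every index set for coordinate k keeps the colour for all of them,
   and Galvin-Glazer gives the blocks of coordinate k.  The last coordinate is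
   unrestricted. *)

Set Implicit Arguments. Unset Strict Implicit. Unset Printing Implicit Defensive.
Local Open Scope classical_set_scope.

Lemma ultra_of_setVsetC {T : Type} (F : set_system T) : ProperFilter F ->
  (forall A, F A \/ F (~` A)) -> UltraFilter F.
Proof.
move=> PF FAC; split=> // G PG sFG; apply/seteqP; split=> // A GA.
have [//|FnA] := FAC A.
have : G (A `&` ~` A) by apply: filterI => //; apply: sFG.
by rewrite setICr => /filter_not_empty.
Qed.

Section UltraMul.
Context {T : Type} (mul : T -> T -> T).

Definition ultra_mul (p q : set_system T) : set_system T :=
  fun A => p (fun x => q (fun y => A (mul x y))).

Lemma ultra_mul_ultra p q : UltraFilter p -> UltraFilter q ->
  UltraFilter (ultra_mul p q).
Proof.
move=> Up Uq; rewrite /ultra_mul /=; apply: ultra_of_setVsetC => [|A /=].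
  apply: Build_ProperFilter; last split => /=.
  - move=> pq0; apply: (filter_not_empty p); move: pq0.
    by apply: filterS => x /filter_not_empty.
  - by apply: filterE => x; apply: filterE.
  - move=> A B /= pA pB; apply: filterS (filterI pA pB) => x [qA qB].
    exact: (filterI qA qB).
  - by move=> A B AB; apply: filterS => x; apply: filterS => y /AB.
have [|pnA] := in_ultra_setVsetC (fun x => q (fun y => A (mul x y))) Up; first by left.
right; move: pnA; apply: filterS => x nqA.
by have [|] := in_ultra_setVsetC (fun y => A (mul x y)) Uq.
Qed.

Hypothesis mulA : associative mul.

Lemma ultra_mulA p q s :
  ultra_mul (ultra_mul p q) s = ultra_mul p (ultra_mul q s).
Proof.
apply/funext => A; rewrite /ultra_mul /=; congr (p _).
apply/funext => x; congr (q _); apply/funext => y; congr (s _).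
by apply/funext => z; rewrite mulA.
Qed.

End UltraMul.

Section EllisNumakura.
Context {T : Type} (mul : T -> T -> T).
Hypothesis mulA : associative mul.
Local Notation "p * q" := (ultra_mul mul p q).

Definition ultras_above (F : set_system T) : set (set_system T) :=
  [set p | UltraFilter p /\ F `<=` p].

Lemma proper_filter_bigcap {I : Type} (D : set I) (f : I -> set_system T) :
  D !=set0 -> (forall i, D i -> ProperFilter (f i)) ->
  ProperFilter (\bigcap_(i in D) f i).
Proof.
move=> [i0 Di0] Df; apply: Build_ProperFilter; last split.
- by move=> /(_ i0 Di0); have := Df i0 Di0 => PF /filter_not_empty.
- by move=> i Di; have := Df i Di => PF; apply: filterT.
- move=> A B fA fB i Di; have := Df i Di => PF.
  by apply: filterI; [apply: fA | apply: fB].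
- by move=> A B AB fA i Di; have := Df i Di => PF; apply: filterS AB (fA i Di).
Qed.

Lemma ultras_above_bigcap {I : Type} (D : set I) (f : I -> set_system T) i :
  D i -> UltraFilter (f i) -> ultras_above (\bigcap_(i in D) f i) (f i).
Proof. by move=> Di Ufi; split=> // A; apply. Qed.

Definition mulr_hull (M : set_system T) p : set_system T :=
  \bigcap_(q in ultras_above M) q * p.

Definition fixed_hull (M : set_system T) p : set_system T :=
  \bigcap_(q in [set q | ultras_above M q /\ q * p = p]) q.

Lemma ultras_above_mulr_hull (M : set_system T) p r : Filter M -> UltraFilter p ->
  ultras_above (mulr_hull M p) r -> exists2 q, ultras_above M q & r = q * p.
Proof.
move=> FM Up [Ur rMp].
pose B (YA : set T * set T) := YA.1 `&` (fun x => p (fun y => YA.2 (mul x y))).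
pose K := filter_from [set YA | M YA.1 /\ r YA.2] B.
have FK : Filter K.
  apply: filter_from_filter; first by exists (setT, setT); split; apply: filterT.
  move=> [Y1 A1] [Y2 A2] [/= MY1 rA1] [/= MY2 rA2].
  exists (Y1 `&` Y2, A1 `&` A2); first by split; apply: filterI.
  by move=> x [[Y1x Y2x] /= pA]; do 2 split=> //; apply: filterS pA => y [].
have PK : ProperFilter K.
  apply: filter_from_proper => -[Y A] [/= MY rA]; apply: contrapT => nB.
  have rnA : r (~` A).
    apply: rMp => q [Uq Mq]; apply: filterS (Mq _ MY) => x Yx.
    have [pA|//] := in_ultra_setVsetC (fun y => A (mul x y)) Up.
    by case: nB; exists x.
  by apply: (filter_not_empty r); rewrite -(setICr A); apply: filterI.
have [q [Uq Kq]] := ultraFilterLemma PK.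
have Mq : M `<=` q.
  move=> Y MY; apply: Kq; exists (Y, setT) => [|x []//].
  by split=> //; apply: filterT.
exists q => //; have Uqp := ultra_mul_ultra mul Uq Up.
apply/esym/max_filter => A rA; apply: Kq; exists (setT, A) => [|x []//].
by split=> //; apply: filterT.
Qed.

Lemma ultras_above_fixed_hull (M : set_system T) p r : UltraFilter p ->
  ultras_above (fixed_hull M p) r -> ultras_above M r /\ r * p = p.
Proof.
move=> Up [Ur Gr]; split.
  by split=> // A MA; apply: Gr => q [[_ Mq] _]; apply: Mq.
have Urp := ultra_mul_ultra mul Ur Up.
by apply: max_filter => A pA; apply: Gr => q [_ qp]; rewrite -qp in pA.
Qed.

Variable F0 : set_system T.
Hypothesis F0_proper : ProperFilter F0.
Hypothesis F0_mul : forall p q,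
  ultras_above F0 p -> ultras_above F0 q -> ultras_above F0 (p * q).

Definition semigroup_filter (F : set_system T) : Prop :=
  [/\ ProperFilter F, F0 `<=` F &
      forall p q, ultras_above F p -> ultras_above F q -> ultras_above F (p * q)].

Lemma semigroup_filter_bigcup (Fs : set (set_system T)) X0 A0 :
  (forall X A, Fs X -> X A -> semigroup_filter X) -> total_on Fs subset ->
  Fs X0 -> X0 A0 -> semigroup_filter (\bigcup_(X in Fs) X).
Proof.
move=> semFs Fs_total FsX0 X0A0; have [PX0 F0X0 _] := semFs _ _ FsX0 X0A0.
have PFs X A : Fs X -> X A -> ProperFilter X by move=> FsX /(semFs _ _ FsX)[].
have XU X : Fs X -> X `<=` \bigcup_(X in Fs) X by move=> FsX B XB; exists X.
split.
- apply: Build_ProperFilter; last split.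
  + by move=> [X FsX X00]; have := PFs _ _ FsX X00 => PX; apply: filter_not_empty X00.
  + by exists X0 => //; apply: filterT.
  + move=> A B [X FsX XA] [Y FsY YB].
    have [XY|YX] := Fs_total _ _ FsX FsY.
      by exists Y => //; have := PFs _ _ FsY YB => PY; apply: filterI; first apply: XY.
    by exists X => //; have := PFs _ _ FsX XA => PX; apply: filterI; last apply: YX.
  + move=> A B AB [X FsX XA]; exists X => //.
    by have := PFs _ _ FsX XA => PX; apply: filterS AB XA.
- by move=> A F0A; exists X0 => //; apply: F0X0.
move=> p q [Up Up_sub] [Uq Uq_sub]; split; first exact: ultra_mul_ultra.
move=> A [X FsX XA]; have [_ _ mulX] := semFs _ _ FsX XA.
have pX : ultras_above X p by split=> //; apply: subset_trans Up_sub; apply: XU.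
have qX : ultras_above X q by split=> //; apply: subset_trans Uq_sub; apply: XU.
by have [_] := mulX p q pX qX; apply.
Qed.

Lemma minimal_semigroup_filter : exists2 M, semigroup_filter M &
  forall G, semigroup_filter G -> M `<=` G -> G `<=` M.
Proof.
(* [set0] is admitted so that the union of the empty chain stays in the family. *)
pose P := [set G | G = set0 \/ semigroup_filter G].
have [M [PM maxM]] : exists M, P M /\ forall G, M `<` G -> ~ P G.
  apply: Zorn_bigcup => Fs FsP Fs_total.
  have semFs X A : Fs X -> X A -> semigroup_filter X.
    by move=> FsX XA; case: (FsP X FsX) => // X0; rewrite X0 in XA.
  have [[A [X0 FsX0 X0A]]|U0] := pselect (\bigcup_(X in Fs) X !=set0).
    by right; apply: semigroup_filter_bigcup semFs Fs_total FsX0 X0A.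
  by left; apply/seteqP; split=> // A UA; apply: U0; exists A.
have semM : semigroup_filter M.
  case: PM => // M0; case: (maxM F0) => [|]; last by right; split.
  by rewrite M0; split=> // /(_ setT filterT).
exists M => // G semG MG; apply: contrapT => nGM.
by apply: (maxM G); [split | right].
Qed.

Lemma mulr_hull_semigroup M p : semigroup_filter M -> ultras_above M p ->
  semigroup_filter (mulr_hull M p) /\ M `<=` mulr_hull M p.
Proof.
move=> [PM F0M mulM] Mp; have [Up _] := Mp.
have HM q : ultras_above M q -> ultras_above (mulr_hull M p) (q * p).
  move=> [Uq Mq]; apply: (ultras_above_bigcap (f := fun q => q * p)); first by split.
  exact: ultra_mul_ultra.
have MH : M `<=` mulr_hull M p by move=> A MA q Mq; have [_] := mulM q p Mq Mp; apply.
split=> //; split.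
- apply: proper_filter_bigcap; first by exists p.
  by move=> q [Uq _]; have Uqp := ultra_mul_ultra mul Uq Up; exact: ultra_proper.
- by move=> A /F0M /MH.
move=> r1 r2 /(ultras_above_mulr_hull _ Up)[q1 Mq1 ->].
move=> /(ultras_above_mulr_hull _ Up)[q2 Mq2 ->].
by rewrite -ultra_mulA //; apply: HM; exact: mulM (mulM _ _ Mq1 Mp) Mq2.
Qed.

Lemma fixed_hull_semigroup M p q0 : semigroup_filter M -> UltraFilter p ->
  ultras_above M q0 -> q0 * p = p ->
  semigroup_filter (fixed_hull M p) /\ M `<=` fixed_hull M p.
Proof.
move=> [PM F0M mulM] Up Mq0 q0p.
have MG : M `<=` fixed_hull M p by move=> A MA q [[_ Mq] _]; apply: Mq.
split=> //; split.
- apply: proper_filter_bigcap; first by exists q0.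
  by move=> q [[Uq _] _]; exact: ultra_proper.
- by move=> A /F0M /MG.
move=> r1 r2 /(ultras_above_fixed_hull Up)[Mr1 r1p].
move=> /(ultras_above_fixed_hull Up)[Mr2 r2p].
apply: ultras_above_bigcap; last by case: (mulM _ _ Mr1 Mr2).
by split; [apply: mulM | rewrite ultra_mulA // r2p].
Qed.

Theorem ultra_idempotent : exists2 p, ultras_above F0 p & p * p = p.
Proof.
have [M semM minM] := minimal_semigroup_filter; have [PM F0M _] := semM.
have [p Mp] : exists p, ultras_above M p := ultraFilterLemma PM.
have [Up sMp] := Mp.
have above_p G : semigroup_filter G -> M `<=` G -> ultras_above G p.
  by move=> semG MG; split=> // A GA; apply: sMp; exact: minM _ semG MG _ GA.
have [semH MH] := mulr_hull_semigroup semM Mp.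
have [q0 Mq0 q0p] := ultras_above_mulr_hull _ Up (above_p _ semH MH).
have [semG MG] := fixed_hull_semigroup semM Up Mq0 (esym q0p).
have [_ pp] := ultras_above_fixed_hull Up (above_p _ semG MG).
by exists p => //; split=> // A /F0M /sMp.
Qed.

End EllisNumakura.

Definition index_tail (k : nat) : set (seq nat) :=
  [set F | fin_index F /\ all (leq k) F].

Definition index_tails : set_system (seq nat) := filter_from setT index_tail.

Lemma index_tailW k k' F : k <= k' -> index_tail k' F -> index_tail k F.
Proof.
by move=> kk' [FF /allP Fk']; split=> //; apply/allP => t /Fk'; apply: leq_trans.
Qed.

Lemma index_tail_cat k F G :
  index_tail k F -> index_tail (last 0 F).+1 G -> index_tail k (F ++ G).
Proof.
case: F => [|a F] [[_ sF] aF] //; case: G => [|b G] [[_ sG] bG] //.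
split; first split => //.
  by rewrite /= cat_path; move: sF sG bG => /= -> -> /andP[-> _].
rewrite all_cat aF /=; apply: sub_all bG => t; apply: leq_trans.
by apply: leqW; have /allP := aF; apply; rewrite /= mem_last.
Qed.

Lemma index_tail_in k : index_tails (index_tail k).
Proof. by exists k. Qed.

Lemma index_tails_proper : ProperFilter index_tails.
Proof.
apply: filter_from_proper => [|k _]; last by exists [:: k]; split; rewrite /= ?leqnn.
apply: filter_from_filter => [|i j _ _]; first by exists 0.
exists (maxn i j) => // F Fij.
by split; apply: index_tailW Fij; rewrite ?leq_maxl ?leq_maxr.
Qed.

Lemma index_tails_mul p q : ultras_above index_tails p -> ultras_above index_tails q ->
  ultras_above index_tails (ultra_mul cat p q).
Proof.
move=> [Up tp] [Uq tq]; split; first exact: ultra_mul_ultra.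
move=> A [k _ kA]; apply: filterS (tp _ (index_tail_in k)) => F kF.
apply: filterS (tq _ (index_tail_in (last 0 F).+1)).
by move=> G kG; apply: kA; apply: index_tail_cat.
Qed.

Lemma index_ultra_idempotent :
  exists2 p, ultras_above index_tails p & ultra_mul cat p p = p.
Proof. exact: (ultra_idempotent (@catA nat) index_tails_proper index_tails_mul). Qed.

Definition block_seq (Y : nat -> seq nat) : Prop :=
  (forall n, fin_index (Y n)) /\ (forall n, last 0 (Y n) < head 0 (Y n.+1)).

Definition block_union (Y : nat -> seq nat) (G : seq nat) : seq nat :=
  flatten (map Y G).

Section IdempotentBlockUnions.
Context (p : set_system (seq nat)) {Up : UltraFilter p}.
Hypothesis p_tails : index_tails `<=` p.
Hypothesis p_idem : ultra_mul cat p p = p.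

Definition shift (A : set (seq nat)) (F : seq nat) : set (seq nat) :=
  fun G => A (F ++ G).

(* The condition B `<=` B^* of the Galvin-Glazer argument. *)
Definition shift_closed (B : set (seq nat)) : Prop :=
  forall F, B F -> p (shift B F).

Lemma index_tail_large k : p (index_tail k).
Proof. exact/p_tails/index_tail_in. Qed.

Lemma shift_large A F : p (shift A F) -> p (fun G => p (shift A (F ++ G))).
Proof.
rewrite -{1}p_idem /ultra_mul; apply: filterS => G; apply: filterS => H.
by rewrite /shift catA.
Qed.

Lemma shift_closed_core A : p A ->
  exists B, [/\ p B, B `<=` A `&` index_tail 0 & shift_closed B].
Proof.
move=> pA; exists (fun F => [/\ A F, p (shift A F) & index_tail 0 F]); split.
- have pAs : p (fun F => p (shift A F)) by rewrite -p_idem in pA.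
  apply: filterS (filterI (filterI pA pAs) (index_tail_large 0)).
  by move=> F [[]].
- by move=> F [].
move=> F [AF pAF tF].
have tlF := index_tail_large (last 0 F).+1.
apply: filterS (filterI (filterI pAF (shift_large pAF)) tlF).
by move=> G [[AFG pAFG] tG]; split=> //; apply: index_tail_cat.
Qed.

Definition next_large_set (B : set (seq nat)) : set (seq nat) :=
  let F := xget [::] B in B `&` shift B F `&` index_tail (last 0 F).+1.

Lemma next_large_setP B : p B -> shift_closed B ->
  [/\ B (xget [::] B), p (next_large_set B) & shift_closed (next_large_set B)].
Proof.
move=> pB sB; set F := xget [::] B.
have BF : B F by apply: xgetPex; apply: filter_ex pB.
split=> //; first exact: filterI (filterI pB (sB F BF)) (index_tail_large _).
move=> G [[BG BFG] tG].
have pBFG : p (fun H => B ((F ++ G) ++ H)) by apply: sB.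
have tlG := index_tail_large (last 0 G).+1.
apply: filterS (filterI (filterI (sB G BG) pBFG) tlG).
move=> H [[BGH BFGH] tH]; rewrite /shift -catA in BFGH.
by split; [split | apply: index_tail_cat tG tH].
Qed.

Section LargeSets.
Variable B0 : set (seq nat).
Hypotheses (pB0 : p B0) (B0_closed : shift_closed B0).

Definition large_sets (n : nat) : set (seq nat) := iter n next_large_set B0.

Definition chosen_block (n : nat) : seq nat := xget [::] (large_sets n).

Lemma large_setsP n : p (large_sets n) /\ shift_closed (large_sets n).
Proof.
by elim: n => [|n [pBn sBn]] //=; have [] := next_large_setP pBn sBn.
Qed.

Lemma chosen_block_in n : large_sets n (chosen_block n).
Proof. by have [pBn sBn] := large_setsP n; have [] := next_large_setP pBn sBn. Qed.

Lemma large_sets_decr n n' : n <= n' -> large_sets n' `<=` large_sets n.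
Proof.
by move/subnK <-; elim: (n' - n) => [|k IH] //= F [[/IH]].
Qed.

Lemma block_union_large_sets G n : fin_index G -> all (leq n) G ->
  large_sets n (block_union chosen_block G).
Proof.
elim: G n => [|a G IH] n [_ sG] //= /andP[na _]; apply: (large_sets_decr na).
case: G IH sG => [|b G] IH sG.
  by rewrite /block_union /= cats0; apply: chosen_block_in.
have Gb : fin_index (b :: G) by split=> //; apply: path_sorted sG.
by have [[]] := IH a.+1 Gb (order_path_min ltn_trans sG).
Qed.

Lemma chosen_block_seq : B0 `<=` index_tail 0 -> block_seq chosen_block.
Proof.
move=> B0t; split=> n.
  by have [] := B0t _ (large_sets_decr (leq0n n) (chosen_block_in n)).
have [_ [[ne _] tl]] := chosen_block_in n.+1; move: ne tl.
by rewrite -/(chosen_block n); case: (chosen_block n.+1) => [|b s] // _ /andP[].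
Qed.

End LargeSets.

Theorem large_block_unions A : p A ->
  exists2 Y, block_seq Y & forall G, fin_index G -> A (block_union Y G).
Proof.
move=> /shift_closed_core[B [pB BA sB]].
exists (chosen_block B); first by apply: chosen_block_seq pB sB _ => F /BA[].
move=> G GF; have G0 : all (leq 0) G by apply/allP.
by case/BA: (block_union_large_sets pB sB GF G0).
Qed.

End IdempotentBlockUnions.

Definition ultra_lim {T : Type} (p : set_system T) (f : T -> nat) : nat :=
  xget 0 [set j | p (fun t => f t = j)].

Lemma ultra_limP {T : Type} (p : set_system T) (f : T -> nat) r :
  UltraFilter p -> (forall t, f t < r) -> p (fun t => f t = ultra_lim p f).
Proof.
move=> Up fr; apply: (xgetPex 0 (P := [set j | p (fun t => f t = j)])).
apply: contrapT => nlim.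
have : p (fun t => forall j : 'I_r, f t <> j).
  apply: (filter_forall (f := fun (j : 'I_r) t => f t <> j)) => j.
  have [pj|//] := in_ultra_setVsetC (fun t => f t = j) Up.
  by case: nlim; exists (val j).
by case/filter_ex => t /(_ (Ordinal (fr t))).
Qed.

Lemma filter_forall_finrep {T X : Type} {I : finType} (F : set_system T)
    {FF : Filter F} (Q : X -> set T) (g : I -> X) :
  (forall i, F (Q (g i))) -> (forall x, exists i, Q (g i) `<=` Q x) ->
  F (fun t => forall x, Q x t).
Proof.
move=> FQ gQ; apply: filterS (filter_forall (f := fun i => Q (g i)) FF FQ).
by move=> t Qt x; have [i /(_ t (Qt i))] := gQ x.
Qed.

Lemma sorted_mask_iota m G : sorted ltn G -> all (fun n => n < m) G ->
  exists b : m.-tuple bool, G = mask b (iota 0 m).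
Proof.
move=> sG Gm; have sz : size [seq n \in G | n <- iota 0 m] == m.
  by rewrite size_map size_iota.
exists (Tuple sz); rewrite /= -filter_mask.
apply: (irr_sorted_eq ltn_trans ltnn) => // [|n].
  by apply: sorted_filter; [apply: ltn_trans | apply: iota_ltn_sorted].
rewrite mem_filter mem_iota /=; case: (boolP (n \in G)) => //= nG.
by rewrite add0n (allP Gm).
Qed.

Definition agree_below (k : nat) (Phi Psi : nat -> seq nat) : Prop :=
  forall i, i < k -> Phi i = Psi i.

Definition depends_below (k : nat) (c : (nat -> seq nat) -> nat) : Prop :=
  forall Phi Psi, agree_below k Phi Psi -> c Phi = c Psi.

Lemma agree_below_with k Phi Psi G : agree_below k Phi Psi ->
  agree_below k.+1 [eta Phi with k |-> G] [eta Psi with k |-> G].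
Proof.
move=> PhiPsi i /=; case: eqP => // /eqP ik; rewrite ltnS leq_eqVlt (negPf ik).
exact: PhiPsi.
Qed.

Definition ord_blocks l (Y : nat -> nat -> seq nat) (G : 'I_l -> seq nat) (n : nat) :=
  block_union (Y n) (nth [::] (fgraph (finfun G)) n).

Lemma ord_blocksE l Y (G : 'I_l -> seq nat) (i : 'I_l) :
  ord_blocks Y G i = block_union (Y i) (G i).
Proof. by rewrite /ord_blocks nth_fgraph_ord ffunE. Qed.

Section BlockRamsey.
Context (p : set_system (seq nat)) {Up : UltraFilter p}.
Hypotheses (p_tails : index_tails `<=` p) (p_idem : ultra_mul cat p p = p).
Variables (m r : nat).

Definition restricted (Y : nat -> nat -> seq nat) (k : nat) (Phi : nat -> seq nat) :=
  forall i, i < k -> exists2 G, fin_index G /\ all (fun n => n < m) G &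
    Phi i = block_union (Y i) G.

Lemma restricted_with Y Z k Phi :
  restricted [eta Y with k |-> Z] k Phi -> restricted Y k Phi.
Proof. by move=> rPhi i ik; have := rPhi i ik; rewrite /= (ltn_eqF ik). Qed.

Lemma restricted_ord_blocks Y k Phi : restricted Y k Phi ->
  exists b : {ffun 'I_k -> m.-tuple bool},
    agree_below k (ord_blocks Y (fun i => mask (b i) (iota 0 m))) Phi.
Proof.
move=> rPhi.
have bP (i : 'I_k) : exists b : m.-tuple bool,
    Phi i = block_union (Y i) (mask b (iota 0 m)).
  have [G [[_ sG] Gm] ->] := rPhi i (ltn_ord i).
  by have [b ->] := sorted_mask_iota sG Gm; exists b.
have [f fP] := fin_all_exists bP.
exists (finfun f) => i ik; rewrite -[i]/(nat_of_ord (Ordinal ik)).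
by rewrite ord_blocksE ffunE -fP.
Qed.

Definition limit_color (c : (nat -> seq nat) -> nat) k (Phi : nat -> seq nat) : nat :=
  ultra_lim p (fun G => c [eta Phi with k |-> G]).

Section LimitColor.
Variables (c : (nat -> seq nat) -> nat) (k : nat).
Hypothesis c_lt : forall Phi, c Phi < r.

Lemma limit_colorP Phi : p (fun G => c [eta Phi with k |-> G] = limit_color c k Phi).
Proof. exact: ultra_limP. Qed.

Lemma limit_color_lt Phi : limit_color c k Phi < r.
Proof. by have [G <-] := filter_ex (limit_colorP Phi). Qed.

Lemma limit_color_depends : depends_below k.+1 c -> depends_below k (limit_color c k).
Proof.
move=> cdep Phi Psi PhiPsi; congr ultra_lim; apply/funext => G.
by apply: cdep; apply: agree_below_with.
Qed.

Lemma extend_coordinate Y j : depends_below k.+1 c ->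
  (forall Phi, restricted Y k Phi -> limit_color c k Phi = j) ->
  exists2 Z, block_seq Z & forall Phi, restricted Y k Phi ->
    (exists2 G, fin_index G & Phi k = block_union Z G) -> c Phi = j.
Proof.
move=> cdep cY.
pose Q Phi G := restricted Y k Phi -> c [eta Phi with k |-> G] = j.
have pQ Phi : p (Q Phi).
  have [rPhi|nrPhi] := pselect (restricted Y k Phi); last by apply: filterE => G /nrPhi.
  by apply: filterS (limit_colorP Phi) => G cG _; rewrite cG cY.
(* [Q Phi] only depends on the restricted prefix of [Phi], and there are
   finitely many of those. *)
have repQ Phi : exists b : {ffun 'I_k -> m.-tuple bool},
    Q (ord_blocks Y (fun i => mask (b i) (iota 0 m))) `<=` Q Phi.
  have [rPhi|nrPhi] := pselect (restricted Y k Phi); last first.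
    by exists [ffun=> [tuple of nseq m false]] => G _ /nrPhi.
  have [b bPhi] := restricted_ord_blocks rPhi; exists b => G QG _.
  rewrite -(cdep _ _ (agree_below_with G bPhi)); apply: QG => i ik.
  by rewrite bPhi //; apply: rPhi.
have [Z bZ QZ] :=
  large_block_unions p_tails p_idem (filter_forall_finrep (fun b => pQ _) repQ).
exists Z => // Phi rPhi [G GF PhikZ]; rewrite -(QZ G GF Phi rPhi).
by apply: cdep => i _ /=; case: eqP => // ->.
Qed.

End LimitColor.

Lemma restricted_ramsey k (c : (nat -> seq nat) -> nat) :
  (forall Phi, c Phi < r) -> depends_below k c ->
  exists Y j, [/\ j < r, forall i, block_seq (Y i) &
    forall Phi, restricted Y k Phi -> c Phi = j].
Proof.
elim: k c => [|k IH] c c_lt cdep.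
  exists (fun _ n => [:: n]), (c (fun _ => [::])).
  by split=> [|i|Phi _]; [apply: c_lt | split | apply: cdep].
have [Y [j [jr bY cY]]] := IH _ (limit_color_lt _ c_lt) (limit_color_depends cdep).
have [Z bZ cZ] := extend_coordinate c_lt cdep cY.
exists [eta Y with k |-> Z], j; split=> // [i|Phi rPhi]; first by rewrite /=; case: eqP.
apply: cZ; first by apply: restricted_with => i ik; apply: rPhi; apply: ltnW.
by have [G [GF _]] := rPhi k (ltnSn k); rewrite /= eqxx; exists G.
Qed.

Theorem block_ramsey l (c : (nat -> seq nat) -> nat) : 0 < l ->
  (forall Phi, c Phi < r) -> depends_below l c ->
  exists Y j, [/\ j < r, forall i, block_seq (Y i) &
    forall G : 'I_l -> seq nat, (forall i, fin_index (G i)) ->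
      (forall i : 'I_l, i < l.-1 -> all (fun n => n < m) (G i)) ->
      c (ord_blocks Y G) = j].
Proof.
move=> l_gt0 c_lt; rewrite -{1}(prednK l_gt0) => cdep.
have [Y [j [jr bY cY]]] :=
  restricted_ramsey (limit_color_lt _ c_lt) (limit_color_depends cdep).
have [Z bZ cZ] := extend_coordinate c_lt cdep cY.
exists [eta Y with l.-1 |-> Z], j; split=> // [i|G GF Gm].
  by rewrite /=; case: eqP.
have ll : l.-1 < l by rewrite ltn_predL.
apply: cZ; last first.
  exists (G (Ordinal ll)) => //.
  by rewrite -[l.-1]/(nat_of_ord (Ordinal ll)) ord_blocksE /= eqxx.
move=> i il; have il' : i < l := leq_trans il (leq_pred l).
exists (G (Ordinal il')); first by split; [apply: GF | apply: (Gm (Ordinal il'))].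
by rewrite -[i]/(nat_of_ord (Ordinal il')) ord_blocksE /= (ltn_eqF il).
Qed.

End BlockRamsey.

Section FiniteSums.
Variables (S : Type) (op : S -> S -> option S).
Hypothesis op_sg : is_psemigroup op.

Lemma padd_assoc : associative (padd op).
Proof.
move=> [a|] [b|] [c|] /=; [exact/esym/op_sg | by case: (op a b) | by []..].
Qed.

Lemma fsum_cat (x : nat -> S) F G : F <> [::] -> G <> [::] ->
  fsum op x (F ++ G) = padd op (fsum op x F) (fsum op x G).
Proof.
elim: F => [|a F IH] // _ G0; case: F IH => [|b F] IH; first by move: G0 {IH}; case: G.
have -> : fsum op x ((a :: b :: F) ++ G) =
    padd op (Some (x a)) (fsum op x ((b :: F) ++ G)) by [].
by rewrite IH // padd_assoc.
Qed.

Lemma fsum_block_union (x y : nat -> S) Y G : (forall n, Y n <> [::]) ->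
  (forall n, fsum op x (Y n) = Some (y n)) -> G <> [::] ->
  fsum op x (block_union Y G) = fsum op y G.
Proof.
move=> Y0 xY; elim: G => [|a G IH] // _; rewrite /block_union /= -/(block_union Y G).
case: G IH => [|b G] IH; first by rewrite cats0 xY.
by rewrite fsum_cat ?xY ?IH // /block_union /=; case: (Y b) (Y0 b).
Qed.

Lemma adequate_fsum (x : nat -> S) F : adequate_seq op x -> fin_index F ->
  fsum op x F = Some (odflt (x 0) (fsum op x F)).
Proof. by move=> [x_def _] /x_def; case: fsum. Qed.

Lemma block_seq_prodsub_fin (x y : nat -> S) Y m : block_seq Y ->
  (forall n, fsum op x (Y n) = Some (y n)) -> prodsub_fin op x 0 m y.
Proof.
move=> [YF Ylt] xY; exists Y; split=> [n _|]; first exact: YF.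
by split=> [_|]; [apply/allP | split=> n _; [apply: Ylt | apply: xY]].
Qed.

Lemma block_seq_prodsub_inf (x y : nat -> S) Y : block_seq Y ->
  (forall n, fsum op x (Y n) = Some (y n)) -> prodsub_inf op x 0 y.
Proof. by move=> [YF Ylt] xY; exists Y; do !split=> //; apply/allP. Qed.

End FiniteSums.

Lemma ord_predE l (i : 'I_l) : l.-1 <= i -> val i = l.-1.
Proof.
move=> ige; apply/eqP; rewrite eqn_leq ige andbT -ltnS prednK ?ltn_ord //.
exact: leq_ltn_trans (ltn_ord i).
Qed.

Lemma cover_coloring l (T : 'I_l -> Type) (pt : forall i, seq nat -> T i) r
    (D : nat -> (forall i, T i) -> Prop) :
  (forall t, exists j, j < r /\ D j t) ->
  exists c : (nat -> seq nat) -> nat, [/\ forall Phi, c Phi < r,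
    depends_below l c & forall Phi, D (c Phi) (fun i => pt i (Phi i))].
Proof.
move=> Dcov; pose c Phi := xget 0 [set j | j < r /\ D j (fun i => pt i (Phi i))].
have cP Phi : c Phi < r /\ D (c Phi) (fun i => pt i (Phi i)).
  exact: (xgetPex 0 (P := [set j | j < r /\ D j (fun i => pt i (Phi i))]) (Dcov _)).
exists c; split=> [Phi|Phi Psi PhiPsi|Phi]; [exact: (cP Phi).1 | | exact: (cP Phi).2].
rewrite /c; have -> // : (fun i => pt i (Phi i)) = (fun i => pt i (Psi i)).
by apply: functional_extensionality_dep => i; rewrite PhiPsi.
Qed.

Unset Implicit Arguments. Set Strict Implicit.

Theorem theorem8 (l : nat) (hl : 1 < l) (S : 'I_l -> Type)
  (op : forall i : 'I_l, S i -> S i -> option (S i))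
  (Hsg : forall i, is_psemigroup (op i))
  (Hcomm : forall i, pcommutative (op i))
  (Hcount : forall i, countable_type (S i))
  (Hadeq : forall i, adequate (op i))
  (x : forall i : 'I_l, nat -> S i)
  (Hx : forall i, adequate_seq (op i) (x i))
  (m r : nat) (hm : 0 < m) (hr : 0 < r)
  (D : nat -> (forall i : 'I_l, S i) -> Prop)
  (Hcov : forall p : (forall i : 'I_l, S i), exists j, j < r /\ D j p) :
  exists j, j < r /\
    exists y : forall i : 'I_l, nat -> S i,
      (forall i : 'I_l, val i < l.-1 -> prodsub_fin (op i) (x i) 0 m (y i)) /\
      (forall i : 'I_l, val i = l.-1 -> prodsub_inf (op i) (x i) 0 (y i)) /\
      (forall p : (forall i : 'I_l, S i),
         (forall i : 'I_l, val i < l.-1 -> FS_upto (op i) (y i) m (p i)) ->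
         (forall i : 'I_l, val i = l.-1 -> FS_from (op i) (y i) 0 (p i)) ->
         D j p).
Proof.
have [p [Up p_tails] p_idem] := index_ultra_idempotent.
(* The default [x i 0] is never used: sums over nonempty index sets are defined. *)
pose pt i F := odflt (x i 0) (fsum (op i) (x i) F).
have [c [c_lt cdep cD]] := cover_coloring pt Hcov.
have [Y [j [jr bY cY]]] := block_ramsey p_tails p_idem m (ltnW hl) c_lt cdep.
pose y i n := pt i (Y i n).
have Yy i n : fsum (op i) (x i) (Y i n) = Some (y i n).
  exact: adequate_fsum (Hx i) ((bY i).1 n).
exists j; split=> //; exists y; split; [|split] => [i _|i _|q q_fin q_inf].
- exact: block_seq_prodsub_fin (bY i) (Yy i).
- exact: block_seq_prodsub_inf (bY i) (Yy i).
have Gex (i : 'I_l) : exists G, [/\ fin_index G, i < l.-1 -> all (fun n => n < m) G &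
    fsum (op i) (y i) G = Some (q i)].
  have [ilt|ige] := ltnP i l.-1.
    by have [G [GF [Gm Gq]]] := q_fin i ilt; exists G.
  have [G [GF [_ Gq]]] := q_inf i (ord_predE ige).
  by exists G; split=> //; rewrite ltnNge ige.
have [G GP] := fin_all_exists Gex.
have -> : q = (fun i => pt i (ord_blocks Y G i)).
  apply: functional_extensionality_dep => i; have [[G0 _] _ Gq] := GP i.
  have Y0 n : Y i n <> [::] by have [/(_ n)[]] := bY i.
  by rewrite /pt ord_blocksE (fsum_block_union (Hsg i) Y0 (Yy i)) ?Gq.
by rewrite -(cY G) => [|i|i]; [exact: cD | case: (GP i) | case: (GP i)].
Qed.
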